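(* Let $\mathcal M=(M,\le,{}^\perp)$ be a complete orthomodular lattice and $L$ an involutive submonoid of $\mathbf{Lin}(\mathcal M)$ containing all Sasaki projections $\pi_m$ ($m\in M$). Then $\mathscr P(L)=(\mathscr P(L),\bigcup,\odot,{}^*,{\sim},\{\mathrm{id}_M\})$ is an involutive generalized dynamic algebra.
   Context: For an orthomodular lattice and $m\in M$, $\pi_m(x)=m\wedge(m^\perp\vee x)$. A map $f\colon M\to M$ is linear if there is $g\colon M\to M$ (unique, written $f^*$) with $f(x)\le y^\perp\iff x\le g(y)^\perp$ for all $x,y$. $\mathbf{Lin}(\mathcal M)$ is the set of linear maps, an involutive monoid under composition, $f\mapsto f^*$, $\mathrm{id}_M$; $\pi_m\in\mathbf{Lin}(\mathcal M)$ and $\pi_m^*=\pi_m$. $\mathscr P(L)$ is the powerset of $L$ with union as join, $A\odot B=\{a\circ b\mid a\in A,b\in B\}$, $A^*=\{a^*\mid a\in A\}$, ${\sim}A=\{\pi_{(\bigvee_{a\in A}a(1))^\perp}\}$; $(\mathscr P(L),\bigcup,\odot,{}^*,\{\mathrm{id}_M\})$ is an involutive unital quantale. An involutive unital quantale is $(Q,\bigsqcup,\odot,{}^*,e)$ with $Q$ a complete join-semilattice, $\odot$ associative and distributing over arbitrary joins in each argument, $e$ a unit, ${}^*$ with $x^{**}=x$, $(x\odot y)^*=y^*\odot x^*$, $(\bigsqcup x_i)^*=\bigsqcup x_i^*$. An involutive generalized dynamic algebra is such a quantale with ${\sim}\colon K\to K$ such that for all $x,y$ and families $(x_i)$: ${\sim}(x\odot{\sim}{\sim}y)={\sim}(x\odot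 y)$; ${\sim}(\bigsqcup_i{\sim}{\sim}x_i)={\sim}(\bigsqcup_i x_i)$; $({\sim}x)^*={\sim}x$; ${\sim}{\sim}({\sim}{\sim}x\odot y)={\sim}({\sim}x\sqcup{\sim}({\sim}x\sqcup y))$. *)

Set Implicit Arguments.

Record COML := {
  car :> Type;
  le : car -> car -> Prop;
  perp : car -> car;
  sup : (car -> Prop) -> car;
  le_refl : forall x, le x x;
  le_trans : forall x y z, le x y -> le y z -> le x z;
  le_antisym : forall x y, le x y -> le y x -> x = y;
  sup_ub : forall (S : car -> Prop) x, S x -> le x (sup S);
  sup_least : forall (S : car -> Prop) y, (forall x, S x -> le x y) -> le (sup S) y;
  perp_invol : forall x, perp (perp x) = x;
  perp_anti : forall x y, le x y -> le (perp y) (perp x);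
  perp_join : forall x, sup (fun z => z = x \/ z = perp x) = sup (fun _ => True);
  (* x /\ x^perp = 0  (meet = sup of common lower bounds, 0 = sup of empty set) *)
  perp_meet : forall x, sup (fun z => le z x /\ le z (perp x)) = sup (fun _ => False);
  orthomodular : forall x y, le x y ->
    y = sup (fun z => z = x \/ z = sup (fun w => le w y /\ le w (perp x)))
}.

Arguments le {c} _ _.
Arguments perp {c} _.
Arguments sup {c} _.

Definition join {M : COML} (x y : M) : M := sup (fun z => z = x \/ z = y).
Definition meet {M : COML} (x y : M) : M := sup (fun z => le z x /\ le z y).
Definition top (M : COML) : M := sup (fun _ => True).

Definition sasaki {M : COML} (m : M) : M -> M :=
  fun x => meet m (join (perp m) x).

Definition is_adjoint {M : COML} (f g : M -> M) : Prop :=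
  forall x y, le (f x) (perp y) <-> le x (perp (g y)).

Definition linear {M : COML} (f : M -> M) : Prop := exists g, is_adjoint f g.

Definition pset (M : COML) := (M -> M) -> Prop.

Definition psubset {M : COML} (A B : pset M) : Prop := forall f, A f -> B f.
Definition punion {M : COML} (S : pset M -> Prop) : pset M :=
  fun f => exists A, S A /\ A f.
Definition podot {M : COML} (A B : pset M) : pset M :=
  fun h => exists a b, A a /\ B b /\ h = (fun x => a (b x)).
Definition pstar {M : COML} (A : pset M) : pset M :=
  fun g => exists a, A a /\ is_adjoint a g.
Definition pneg {M : COML} (A : pset M) : pset M :=
  fun f => f = sasaki (perp (sup (fun z => exists a, A a /\ z = a (top M)))).
Definition punit (M : COML) : pset M := fun f => f = (fun x => x).

Section Algebra.
Variables (Q : Type) (D : Q -> Prop) (leQ : Q -> Q -> Prop) (supQ : (Q -> Prop) -> Q)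
          (mul : Q -> Q -> Q) (star : Q -> Q) (e : Q).

Definition subD (S : Q -> Prop) : Prop := forall x, S x -> D x.
Definition joinQ (x y : Q) : Q := supQ (fun z => z = x \/ z = y).

Record inv_unital_quantale_on : Prop := {
  iq_refl : forall x, D x -> leQ x x;
  iq_trans : forall x y z, D x -> D y -> D z -> leQ x y -> leQ y z -> leQ x z;
  iq_antisym : forall x y, D x -> D y -> leQ x y -> leQ y x -> x = y;
  iq_sup_in : forall S, subD S -> D (supQ S);
  iq_sup_ub : forall S x, subD S -> S x -> leQ x (supQ S);
  iq_sup_least : forall S y, subD S -> D y -> (forall x, S x -> leQ x y) -> leQ (supQ S) y;
  iq_mul_in : forall x y, D x -> D y -> D (mul x y);
  iq_star_in : forall x, D x -> D (star x);
  iq_e_in : D e;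
  iq_assoc : forall x y z, D x -> D y -> D z -> mul x (mul y z) = mul (mul x y) z;
  iq_distr_l : forall x S, D x -> subD S ->
    mul x (supQ S) = supQ (fun z => exists y, S y /\ z = mul x y);
  iq_distr_r : forall S x, subD S -> D x ->
    mul (supQ S) x = supQ (fun z => exists y, S y /\ z = mul y x);
  iq_unit_l : forall x, D x -> mul e x = x;
  iq_unit_r : forall x, D x -> mul x e = x;
  iq_star_invol : forall x, D x -> star (star x) = x;
  iq_star_mul : forall x y, D x -> D y -> star (mul x y) = mul (star y) (star x);
  iq_star_sup : forall S, subD S ->
    star (supQ S) = supQ (fun z => exists y, S y /\ z = star y)
}.

Record inv_gen_dynamic_algebra_on (neg : Q -> Q) : Prop := {
  igda_quantale : inv_unital_quantale_on;
  igda_neg_in : forall x, D x -> D (neg x);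
  igda_ax1 : forall x y, D x -> D y -> neg (mul x (neg (neg y))) = neg (mul x y);
  igda_ax2 : forall (I : Type) (x : I -> Q), (forall i, D (x i)) ->
    neg (supQ (fun z => exists i, z = neg (neg (x i))))
    = neg (supQ (fun z => exists i, z = x i));
  igda_ax3 : forall x, D x -> star (neg x) = neg x;
  igda_ax4 : forall x y, D x -> D y ->
    neg (neg (mul (neg (neg x)) y)) = neg (joinQ (neg x) (neg (joinQ (neg x) y)))
}.
End Algebra.

From Stdlib Require Import FunctionalExtensionality PropExtensionality.

(* Everything is governed by the element s(A) := \/_{a in A} a(1) of M.
   Since pi_m(1) = m, we get s(~A) = s(A)^perp and hence ~~A = {pi_{s(A)}}.
   A linear map has an adjoint, so it preserves arbitrary joins and
   s(A (.) B) = \/_{a in A} a(s(B)).  By orthomodularity Sasaki projections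
   are self-adjoint, so each of the four axioms reduces to an identity
   between values of s; the last one is s(A) /\ (s(A)^perp \/ s(B)) =
   pi_{s(A)}(s(B)), which is the definition of the Sasaki projection.
   The quantale laws are set-theoretic, except that ^* is an involutive
   anti-homomorphism on linear maps, by uniqueness of adjoints. *)

Section Lattice.
Context {M : COML}.
Implicit Types (x y z m : M) (S : M -> Prop).

Lemma eq_by_upper_bounds x y : (forall z, le x z <-> le y z) -> x = y.
Proof.
  intros H. apply le_antisym; [apply (proj2 (H y)) | apply (proj1 (H x))];
    apply le_refl.
Qed.

Lemma eq_by_lower_bounds x y : (forall z, le z x <-> le z y) -> x = y.
Proof.
  intros H. apply le_antisym; [apply (proj1 (H x)) | apply (proj2 (H y))];
    apply le_refl.
Qed.

Lemma sup_le_iff S z : le (sup S) z <-> forall x, S x -> le x z.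
Proof.
  split.
  - intros H x Hx. eapply le_trans; [apply sup_ub; exact Hx | exact H].
  - apply sup_least.
Qed.

Lemma join_le_iff x y z : le (join x y) z <-> le x z /\ le y z.
Proof.
  unfold join. rewrite sup_le_iff. split.
  - intros H. split; apply H; auto.
  - intros [Hx Hy] w [-> | ->]; assumption.
Qed.

Lemma le_meet_iff x y z : le z (meet x y) <-> le z x /\ le z y.
Proof.
  unfold meet. split.
  - intros H. split; eapply le_trans; try exact H;
      apply sup_least; intros w [Hwx Hwy]; assumption.
  - intros H. apply sup_ub. exact H.
Qed.

Lemma join_ub_l x y : le x (join x y).
Proof. exact (proj1 (proj1 (join_le_iff x y _) (le_refl _ _))). Qed.

Lemma join_ub_r x y : le y (join x y).
Proof. exact (proj2 (proj1 (join_le_iff x y _) (le_refl _ _))). Qed.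

Lemma meet_lb_l x y : le (meet x y) x.
Proof. exact (proj1 (proj1 (le_meet_iff x y _) (le_refl _ _))). Qed.

Lemma meet_lb_r x y : le (meet x y) y.
Proof. exact (proj2 (proj1 (le_meet_iff x y _) (le_refl _ _))). Qed.

Lemma join_comm x y : join x y = join y x.
Proof. apply eq_by_upper_bounds. intros z. rewrite !join_le_iff. tauto. Qed.

Lemma meet_comm x y : meet x y = meet y x.
Proof. apply eq_by_lower_bounds. intros z. rewrite !le_meet_iff. tauto. Qed.

Lemma le_top x : le x (top M).
Proof. apply sup_ub. exact I. Qed.

Lemma le_perp_swap x y : le x (perp y) <-> le y (perp x).
Proof.
  split; intros H; apply perp_anti in H; rewrite perp_invol in H; exact H.
Qed.

Lemma perp_join_meet x y : perp (join x y) = meet (perp x) (perp y).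
Proof.
  apply eq_by_lower_bounds. intros z.
  rewrite le_perp_swap, join_le_iff, le_meet_iff, !(le_perp_swap z). tauto.
Qed.

Lemma perp_meet_join x y : perp (meet x y) = join (perp x) (perp y).
Proof.
  rewrite <- (perp_invol _ (join _ _)), perp_join_meet, !perp_invol.
  reflexivity.
Qed.

Lemma orthomodular_join {x y} : le x y -> y = join x (meet y (perp x)).
Proof. exact (orthomodular _ x y). Qed.

Lemma sasaki_id {m x} : le x m -> sasaki m x = x.
Proof.
  intros Hxm. apply perp_anti, orthomodular_join in Hxm.
  apply (f_equal perp) in Hxm.
  rewrite perp_invol, perp_join_meet, perp_meet_join, !perp_invol in Hxm.
  unfold sasaki. rewrite (join_comm _ x). symmetry. exact Hxm.
Qed.

Lemma sasaki_top m : sasaki m (top M) = m.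
Proof.
  apply eq_by_lower_bounds. intros z. unfold sasaki. rewrite le_meet_iff.
  split; [tauto |]. intros Hzm. split; [exact Hzm |].
  eapply le_trans; [apply le_top | apply join_ub_r].
Qed.

Lemma sasaki_le_iff m x z :
  le (sasaki m x) z <-> le x (join (perp m) (meet m z)).
Proof.
  split.
  - intros H. apply le_trans with (join (perp m) x); [apply join_ub_r |].
    rewrite (orthomodular_join (join_ub_l (perp m) x)), perp_invol.
    rewrite join_le_iff. split; [apply join_ub_l |].
    eapply le_trans; [| apply join_ub_r].
    rewrite le_meet_iff. split; [apply meet_lb_r |].
    rewrite meet_comm. exact H.
  - intros H. apply le_trans with (meet m z); [| apply meet_lb_r].
    rewrite <- (sasaki_id (meet_lb_l m z)). unfold sasaki.
    rewrite le_meet_iff. split; [apply meet_lb_l |].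
    eapply le_trans; [apply meet_lb_r |].
    rewrite join_le_iff. split; [apply join_ub_l | exact H].
Qed.

Lemma sasaki_adjoint m : is_adjoint (sasaki m) (sasaki m).
Proof.
  intros x y. rewrite sasaki_le_iff. unfold sasaki.
  rewrite perp_meet_join, perp_join_meet, !perp_invol. reflexivity.
Qed.

Implicit Types f g : M -> M.

Lemma adjoint_le_iff {f g} (H : is_adjoint f g) u z :
  le (f u) z <-> le u (perp (g (perp z))).
Proof. rewrite <- (perp_invol _ z) at 1. apply H. Qed.

Lemma adjoint_sup_le_iff {f g} (H : is_adjoint f g) S z :
  le (f (sup S)) z <-> forall x, S x -> le (f x) z.
Proof.
  rewrite (adjoint_le_iff H), sup_le_iff.
  split; intros Hle x Hx; apply (adjoint_le_iff H); auto.
Qed.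

Lemma adjoint_sym {f g} : is_adjoint f g -> is_adjoint g f.
Proof.
  intros H x y. rewrite (le_perp_swap (g x)), (le_perp_swap x), (H y x).
  reflexivity.
Qed.

Lemma adjoint_unique {f g g'} : is_adjoint f g -> is_adjoint f g' -> g = g'.
Proof.
  intros Hg Hg'. apply functional_extensionality. intros y.
  rewrite <- (perp_invol _ (g y)), <- (perp_invol _ (g' y)). f_equal.
  apply eq_by_lower_bounds. intros x. rewrite <- (Hg x y), <- (Hg' x y).
  reflexivity.
Qed.

Lemma adjoint_comp {f f' g g'} : is_adjoint f f' -> is_adjoint g g' ->
  is_adjoint (fun x => f (g x)) (fun y => g' (f' y)).
Proof. intros Hf Hg x y. rewrite (Hf (g x) y), (Hg x (f' y)). reflexivity. Qed.

End Lattice.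

Section Powerset.
Context {M : COML}.
Implicit Types (A B C : pset M) (S : pset M -> Prop) (m z : M).

Lemma pset_ext A B : (forall f, A f <-> B f) -> A = B.
Proof.
  intros H. apply functional_extensionality. intros f.
  apply propositional_extensionality. apply H.
Qed.

Definition ptop A : M := sup (fun z => exists a, A a /\ z = a (top M)).

Lemma ptop_le_iff A z : le (ptop A) z <-> forall a, A a -> le (a (top M)) z.
Proof.
  unfold ptop. rewrite sup_le_iff. split.
  - intros H a Ha. apply H. eauto.
  - intros H x [a [Ha ->]]. auto.
Qed.

Lemma pnegE A : pneg A = fun f => f = sasaki (perp (ptop A)).
Proof. reflexivity. Qed.

Lemma ptop_pneg A : ptop (pneg A) = perp (ptop A).
Proof.
  apply eq_by_upper_bounds. intros z. rewrite ptop_le_iff. unfold pneg. split.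
  - intros H. rewrite <- (sasaki_top (perp (ptop A))). apply H. reflexivity.
  - intros H a ->. rewrite sasaki_top. exact H.
Qed.

Lemma pneg_pneg A : pneg (pneg A) = fun f => f = sasaki (ptop A).
Proof.
  rewrite (pnegE (pneg A)), ptop_pneg, perp_invol. reflexivity.
Qed.

Lemma ptop_pneg_pneg A : ptop (pneg (pneg A)) = ptop A.
Proof. rewrite !ptop_pneg. apply perp_invol. Qed.

Lemma eq_pneg A B : ptop A = ptop B -> pneg A = pneg B.
Proof. intros H. rewrite !pnegE, H. reflexivity. Qed.

Lemma ptop_punion_le_iff S z :
  le (ptop (punion S)) z <-> forall A, S A -> le (ptop A) z.
Proof.
  rewrite ptop_le_iff. split.
  - intros H A HA. rewrite ptop_le_iff. intros a Ha. apply H. exists A. auto.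
  - intros H a [A [HA Ha]]. exact (proj1 (ptop_le_iff A z) (H A HA) a Ha).
Qed.

Lemma ptop_join A B : ptop (joinQ (@punion M) A B) = join (ptop A) (ptop B).
Proof.
  apply eq_by_upper_bounds. intros z.
  unfold joinQ. rewrite ptop_punion_le_iff, join_le_iff. split.
  - intros H. split; apply H; auto.
  - intros [HA HB] C [-> | ->]; assumption.
Qed.

Lemma ptop_podot A B : psubset A linear ->
  ptop (podot A B) = sup (fun z => exists a, A a /\ z = a (ptop B)).
Proof.
  intros HA. apply eq_by_upper_bounds. intros z.
  rewrite ptop_le_iff, sup_le_iff. split.
  - intros H x [a [Ha ->]]. destruct (HA a Ha) as [a' Ha'].
    unfold ptop. rewrite (adjoint_sup_le_iff Ha').
    intros x [b [Hb ->]]. apply (H (fun x => a (b x))). exists a, b. auto.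
  - intros H h [a [b [Ha [Hb ->]]]]. destruct (HA a Ha) as [a' Ha'].
    assert (Hab : le (a (ptop B)) z) by (apply H; exists a; auto).
    unfold ptop in Hab. rewrite (adjoint_sup_le_iff Ha') in Hab.
    apply Hab. exists b. auto.
Qed.

Lemma ptop_sasaki_podot m B :
  ptop (podot (fun f => f = sasaki m) B) = sasaki m (ptop B).
Proof.
  rewrite ptop_podot.
  - apply eq_by_upper_bounds. intros z. rewrite sup_le_iff. split.
    + intros H. apply H. exists (sasaki m). auto.
    + intros H x [a [-> ->]]. exact H.
  - intros f ->. exists (sasaki m). apply sasaki_adjoint.
Qed.

Lemma pstar_sasaki m : pstar (fun f => f = sasaki m) = fun f => f = sasaki m.
Proof.
  apply pset_ext. intros f. split.
  - intros [a [-> Hf]]. symmetry. exact (adjoint_unique (sasaki_adjoint m) Hf).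
  - intros ->. exists (sasaki m). split; [reflexivity | apply sasaki_adjoint].
Qed.

Lemma podotA A B C : podot A (podot B C) = podot (podot A B) C.
Proof.
  apply pset_ext. intros h. split.
  - intros [a [bc [Ha [[b [c [Hb [Hc ->]]]] ->]]]].
    exists (fun x => a (b x)), c. split; [exists a, b; auto | auto].
  - intros [ab [c [[a [b [Ha [Hb ->]]]] [Hc ->]]]].
    exists a, (fun x => b (c x)). split; [auto |].
    split; [exists b, c; auto | reflexivity].
Qed.

Lemma podot_punionr A S :
  podot A (punion S) = punion (fun Z => exists B, S B /\ Z = podot A B).
Proof.
  apply pset_ext. intros h. split.
  - intros [a [b [Ha [[B [HB Hb]] ->]]]].
    exists (podot A B). split; [exists B; auto | exists a, b; auto].
  - intros [Z [[B [HB ->]] [a [b [Ha [Hb ->]]]]]].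
    exists a, b. split; [auto |]. split; [exists B; auto | reflexivity].
Qed.

Lemma podot_punionl S B :
  podot (punion S) B = punion (fun Z => exists A, S A /\ Z = podot A B).
Proof.
  apply pset_ext. intros h. split.
  - intros [a [b [[A [HA Ha]] [Hb ->]]]].
    exists (podot A B). split; [exists A; auto | exists a, b; auto].
  - intros [Z [[A [HA ->]] [a [b [Ha [Hb ->]]]]]].
    exists a, b. split; [exists A; auto | auto].
Qed.

Lemma podot1l A : podot (punit M) A = A.
Proof.
  apply pset_ext. intros h. split.
  - intros [a [b [-> [Hb ->]]]]. exact Hb.
  - intros Hh. exists (fun x => x), h. unfold punit. auto.
Qed.

Lemma podot1r A : podot A (punit M) = A.
Proof.
  apply pset_ext. intros h. split.
  - intros [a [b [Ha [-> ->]]]]. exact Ha.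
  - intros Hh. exists h, (fun x => x). unfold punit. auto.
Qed.

Lemma pstarK A : psubset A linear -> pstar (pstar A) = A.
Proof.
  intros HA. apply pset_ext. intros h. split.
  - intros [g [[a [Ha Hag]] Hgh]].
    rewrite <- (adjoint_unique (adjoint_sym Hag) Hgh). exact Ha.
  - intros Hh. destruct (HA h Hh) as [g Hg].
    exists g. split; [exists h; auto | exact (adjoint_sym Hg)].
Qed.

Lemma pstar_podot A B : psubset A linear -> psubset B linear ->
  pstar (podot A B) = podot (pstar B) (pstar A).
Proof.
  intros HA HB. apply pset_ext. intros h. split.
  - intros [c [[a [b [Ha [Hb ->]]]] Hc]].
    destruct (HA a Ha) as [a' Ha'], (HB b Hb) as [b' Hb'].
    exists b', a'. split; [exists b; auto |]. split; [exists a; auto |].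
    exact (adjoint_unique Hc (adjoint_comp Ha' Hb')).
  - intros [b' [a' [[b [Hb Hbb']] [[a [Ha Haa']] ->]]]].
    exists (fun x => a (b x)).
    split; [exists a, b; auto | exact (adjoint_comp Haa' Hbb')].
Qed.

Lemma pstar_punion S :
  pstar (punion S) = punion (fun Z => exists A, S A /\ Z = pstar A).
Proof.
  apply pset_ext. intros h. split.
  - intros [a [[A [HA Ha]] Hah]].
    exists (pstar A). split; [exists A; auto | exists a; auto].
  - intros [Z [[A [HA ->]] [a [Ha Hah]]]].
    exists a. split; [exists A; auto | exact Hah].
Qed.

Lemma pneg_podot_pneg2 A B : psubset A linear ->
  pneg (podot A (pneg (pneg B))) = pneg (podot A B).
Proof.
  intros HA. apply eq_pneg. rewrite !(ptop_podot _ _ HA), ptop_pneg_pneg.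
  reflexivity.
Qed.

Lemma pneg_punion_pneg2 (I : Type) (A : I -> pset M) :
  pneg (punion (fun Z => exists i, Z = pneg (pneg (A i))))
  = pneg (punion (fun Z => exists i, Z = A i)).
Proof.
  apply eq_pneg, eq_by_upper_bounds. intros z. rewrite !ptop_punion_le_iff.
  split; intros H B [i ->].
  - rewrite <- ptop_pneg_pneg. apply H. exists i. reflexivity.
  - rewrite ptop_pneg_pneg. apply H. exists i. reflexivity.
Qed.

Lemma pstar_pneg A : pstar (pneg A) = pneg A.
Proof. apply pstar_sasaki. Qed.

Lemma pneg2_podot A B :
  pneg (pneg (podot (pneg (pneg A)) B))
  = pneg (joinQ (@punion M) (pneg A) (pneg (joinQ (@punion M) (pneg A) B))).
Proof.
  rewrite (pneg_pneg (podot _ _)), pneg_pneg, ptop_sasaki_podot.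
  rewrite (pnegE (joinQ _ _ _)), !ptop_join, !ptop_pneg, ptop_join, ptop_pneg.
  rewrite perp_join_meet, !perp_invol. reflexivity.
Qed.

End Powerset.

Section LinearSubmonoid.
Context {M : COML} {L : (M -> M) -> Prop}.
Hypothesis L_linear : forall f, L f -> linear f.
Hypothesis L_id : L (fun x => x).
Hypothesis L_comp : forall f g, L f -> L g -> L (fun x => f (g x)).
Hypothesis L_adjoint : forall f g, L f -> is_adjoint f g -> L g.

Lemma psubset_linear {A : pset M} : psubset A L -> psubset A linear.
Proof. intros HA f Hf. exact (L_linear _ (HA f Hf)). Qed.

Lemma pset_inv_unital_quantale :
  inv_unital_quantale_on (fun A : pset M => psubset A L)
    (@psubset M) (@punion M) (@podot M) (@pstar M) (punit M).
Proof.
  split.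
  - intros A _ f Hf. exact Hf.
  - intros A B C _ _ _ HAB HBC f Hf. auto.
  - intros A B _ _ HAB HBA. apply pset_ext. split; auto.
  - intros S HS f [A [HA Hf]]. exact (HS A HA f Hf).
  - intros S A _ HA f Hf. exists A. auto.
  - intros S B _ _ HB f [A [HA Hf]]. exact (HB A HA f Hf).
  - intros A B HA HB h [a [b [Ha [Hb ->]]]]. auto.
  - intros A HA g [a [Ha Hag]]. exact (L_adjoint _ _ (HA a Ha) Hag).
  - intros f ->. exact L_id.
  - intros A B C _ _ _. apply podotA.
  - intros A S _ _. apply podot_punionr.
  - intros S B _ _. apply podot_punionl.
  - intros A _. apply podot1l.
  - intros A _. apply podot1r.
  - intros A HA. exact (pstarK _ (psubset_linear HA)).
  - intros A B HA HB.
    exact (pstar_podot _ _ (psubset_linear HA) (psubset_linear HB)).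
  - intros S _. apply pstar_punion.
Qed.

End LinearSubmonoid.

Theorem lemma3p9 (M : COML) (L : (M -> M) -> Prop)
  (HLin : forall f, L f -> linear f)
  (Hid : L (fun x => x))
  (Hcomp : forall f g, L f -> L g -> L (fun x => f (g x)))
  (Hinv : forall f g, L f -> is_adjoint f g -> L g)
  (Hpi : forall m : M, L (sasaki m)) :
  inv_gen_dynamic_algebra_on
    (fun A : pset M => psubset A L)
    (@psubset M) (@punion M) (@podot M) (@pstar M) (punit M) (@pneg M).
Proof.
  split.
  - exact (pset_inv_unital_quantale HLin Hid Hcomp Hinv).
  - intros A _ f ->. apply Hpi.
  - intros A B HA _. exact (pneg_podot_pneg2 _ B (psubset_linear HLin HA)).
  - intros I A _. apply pneg_punion_pneg2.
  - intros A _. apply pstar_pneg.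
  - intros A B _ _. apply pneg2_podot.
Qed.
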